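(* If $A$ is any SIP subset of $\mathbb N$ (including $\mathbb N$ itself), then $A$ can be partitioned into two sets neither of which contains a translate of an SIP set. Consequently, the family of subsets of $\mathbb N$ that contain a translate of an SIP set is not a filterdual.
   Context: $\mathbb N=\{1,2,\dots\}$. For a finite $F\subset\mathbb Z$, $\sigma_F$ is the sum of its elements ($\sigma_\emptyset=0$); for $A\subset\mathbb Z$, $IP(A)=\{\sigma_F:F\subset A\text{ finite}\}$ and $SIP(A)=\{a-b:a,b\in IP(A)\}$. A set $B\subset\mathbb N$ is an SIP set if $SIP(L)\cap\mathbb N\subset B$ for some infinite $L\subset\mathbb N$. A set $B\subset\mathbb N$ contains a translate of an SIP set if there exist an infinite $L\subset\mathbb N$ and $u\in\mathbb Z$ with $(SIP(L)+u)\cap\mathbb N\subset B$. A family $\mathcal F$ of subsets of $\mathbb N$ (closed under supersets) is a filterdual if $A_1\cup A_2\in\mathcal F$ implies $A_1\in\mathcal F$ or $A_2\in\mathcal F$. *)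

(* subsets of Z are predicates Z -> Prop; N = {1,2,...} is
   the set of positive integers. *)
From Stdlib Require Import ZArith List.
Open Scope Z_scope.

(* sigma_F : sum of the elements of a finite set F, given as a duplicate-free list *)
Definition sigma (F : list Z) : Z := fold_right Z.add 0 F.

Definition subN (B : Z -> Prop) : Prop := forall x, B x -> 0 < x.

Definition infinite_set (L : Z -> Prop) : Prop :=
  ~ (exists l : list Z, forall x, L x -> In x l).

(* IP(A) = { sigma_F : F finite subset of A } (empty F gives 0) *)
Definition IP (A : Z -> Prop) (x : Z) : Prop :=
  exists F : list Z, NoDup F /\ (forall y, In y F -> A y) /\ x = sigma F.

Definition SIP (A : Z -> Prop) (x : Z) : Prop :=
  exists a b, IP A a /\ IP A b /\ x = a - b.

Definition is_SIP_set (B : Z -> Prop) : Prop :=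
  exists L : Z -> Prop, subN L /\ infinite_set L /\
    (forall x, SIP L x -> 0 < x -> B x).

Definition contains_translate_SIP (B : Z -> Prop) : Prop :=
  exists (L : Z -> Prop) (u : Z), subN L /\ infinite_set L /\
    (forall x, SIP L x -> 0 < x + u -> B (x + u)).

Definition filterdual (Fam : (Z -> Prop) -> Prop) : Prop :=
  forall A1 A2 : Z -> Prop, subN A1 -> subN A2 ->
    Fam (fun x => A1 x \/ A2 x) -> Fam A1 \/ Fam A2.

From Stdlib Require Import ZArith List Lia Classical.
Import ListNotations.
Open Scope Z_scope.

(* Colour a positive integer by the parity of the number of blocks of 1s in
   its binary expansion. Suppose (SIP(L) + u) ∩ N were monochromatic. Take
   l0 in L with y0 = l0 + u > 0 and put M = 2^(y0+1). By pigeonhole on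
   residues, L contains pairs a_i < b_i with b_i - a_i = M x, M y, M z where
   0 < x < y < z, 2^(x+1) | y and 2^(y+1) | z; then y0 + M m lies in
   SIP(L) + u for every pairwise difference m of 0, x, y, z. Since y0 < 2^y0,
   the binary expansion of y0 + M m is that of m followed by a 0 and that of
   y0, so all six values m have an even number of blocks. When 2^(a+1)
   divides b and a, b have an even number of blocks, the borrow makes b - a
   have an even number of blocks only if exactly one of a, b has a lowest
   block of length 1; three numbers cannot pairwise satisfy this. Splitting any set by the colour gives the
   theorem, and the case A = N refutes the filterdual property. *)

(* [runs_odd x] is the parity of the number of maximal blocks of 1s in the
   binary expansion of [x]; [low_run_single x] says that its lowest block has
   length 1. Both recursions read the bits from the least significant one. *)
Fixpoint runs_odd_pos (p : positive) : bool :=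
  match p with
  | xH => true
  | xO q => runs_odd_pos q
  | xI q => xorb (runs_odd_pos q) (Z.even (Zpos q))
  end.

Fixpoint low_run_single_pos (p : positive) : bool :=
  match p with
  | xH => true
  | xO q => low_run_single_pos q
  | xI q => Z.even (Zpos q)
  end.

Definition runs_odd (x : Z) : bool :=
  match x with Zpos p => runs_odd_pos p | _ => false end.

Definition low_run_single (x : Z) : bool :=
  match x with Zpos p => low_run_single_pos p | _ => false end.

Lemma runs_odd_double x : 0 <= x -> runs_odd (2 * x) = runs_odd x.
Proof. destruct x; simpl; auto; lia. Qed.

Lemma runs_odd_double_succ x :
  0 <= x -> runs_odd (2 * x + 1) = xorb (runs_odd x) (Z.even x).
Proof. destruct x as [|[]|]; simpl; auto; lia. Qed.

Lemma low_run_single_double x : 0 <= x -> low_run_single (2 * x) = low_run_single x.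
Proof. destruct x; simpl; auto; lia. Qed.

Lemma low_run_single_double_succ x : 0 <= x -> low_run_single (2 * x + 1) = Z.even x.
Proof. destruct x as [|[]|]; simpl; auto; lia. Qed.

Lemma runs_odd_pred x : 1 <= x ->
  xorb (runs_odd x) (runs_odd (x - 1)) = xorb (Z.even x) (low_run_single x).
Proof.
  destruct x as [|p|p]; intro Hx; try lia.
  induction p as [q _|q IH|]; [| |reflexivity].
  - change (Zpos q~1) with (2 * Zpos q + 1).
    replace (2 * Zpos q + 1 - 1) with (2 * Zpos q) by ring.
    rewrite runs_odd_double_succ, runs_odd_double, low_run_single_double_succ by lia.
    rewrite Z.even_add, Z.even_mul.
    destruct (runs_odd (Zpos q)), (Z.even (Zpos q)); reflexivity.
  - change (Zpos q~0) with (2 * Zpos q).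
    replace (2 * Zpos q - 1) with (2 * (Zpos q - 1) + 1) by ring.
    rewrite runs_odd_double, runs_odd_double_succ, low_run_single_double by lia.
    rewrite Z.even_mul, Z.even_sub.
    specialize (IH ltac:(lia)).
    destruct (runs_odd (Zpos q)), (runs_odd (Zpos q - 1)), (Z.even (Zpos q)),
      (low_run_single (Zpos q)); simpl in *; congruence.
Qed.

Lemma runs_odd_concat k a b : 0 <= k -> 0 <= a < 2 ^ k -> 0 <= b ->
  runs_odd (a + 2 ^ (k + 1) * b) = xorb (runs_odd a) (runs_odd b).
Proof.
  intro Hk; revert a b; pattern k; apply natlike_ind; [| |exact Hk]; clear k Hk.
  - intros a b Ha Hb; replace a with 0 by (simpl in Ha; lia).
    apply runs_odd_double; exact Hb.
  - intros k Hk IH a b Ha Hb.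
    rewrite Z.pow_succ_r in Ha by lia.
    replace (Z.succ k + 1) with (Z.succ (k + 1)) by ring.
    rewrite Z.pow_succ_r by lia.
    assert (0 <= 2 ^ (k + 1) * b) by (apply Z.mul_nonneg_nonneg; lia).
    destruct (Z.Even_or_Odd a) as [[a' ->]|[a' ->]].
    + replace (2 * a' + 2 * 2 ^ (k + 1) * b) with (2 * (a' + 2 ^ (k + 1) * b)) by ring.
      rewrite !runs_odd_double by lia. apply IH; lia.
    + replace (2 * a' + 1 + 2 * 2 ^ (k + 1) * b)
        with (2 * (a' + 2 ^ (k + 1) * b) + 1) by ring.
      rewrite !runs_odd_double_succ, IH by lia.
      rewrite Z.even_add, Z.even_mul, Z.even_pow by lia; simpl (Z.even 2).
      destruct (runs_odd a'), (runs_odd b), (Z.even a'); reflexivity.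
Qed.

Lemma runs_odd_shift m x : 0 <= m -> 0 <= x -> runs_odd (2 ^ m * x) = runs_odd x.
Proof.
  intros Hm Hx; pattern m; apply natlike_ind; [now rewrite Z.mul_1_l| |exact Hm].
  clear m Hm.
  intros m Hm IH. rewrite Z.pow_succ_r, <- Z.mul_assoc, runs_odd_double by lia.
  exact IH.
Qed.

Lemma low_run_single_shift m x :
  0 <= m -> 0 <= x -> low_run_single (2 ^ m * x) = low_run_single x.
Proof.
  intros Hm Hx; pattern m; apply natlike_ind; [now rewrite Z.mul_1_l| |exact Hm].
  clear m Hm.
  intros m Hm IH. rewrite Z.pow_succ_r, <- Z.mul_assoc, low_run_single_double by lia.
  exact IH.
Qed.

Lemma runs_odd_sub k a b : 0 <= k -> 1 <= a <= 2 ^ k -> 1 <= b ->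
  runs_odd (2 ^ (k + 1) * b - a) =
  negb (xorb (xorb (runs_odd a) (runs_odd b))
             (xorb (low_run_single a) (low_run_single b))).
Proof.
  intro Hk; revert a b; pattern k; apply natlike_ind; [| |exact Hk]; clear k Hk.
  - intros a b Ha Hb; replace a with 1 by (simpl in Ha; lia).
    change (2 ^ (0 + 1)) with 2.
    replace (2 * b - 1) with (2 * (b - 1) + 1) by ring.
    rewrite runs_odd_double_succ, Z.even_sub by lia.
    assert (Hpred := runs_odd_pred b Hb).
    destruct (runs_odd b), (runs_odd (b - 1)), (Z.even b), (low_run_single b);
      simpl in *; congruence.
  - intros k Hk IH a b Ha Hb.
    rewrite Z.pow_succ_r in Ha by lia.
    replace (Z.succ k + 1) with (Z.succ (k + 1)) by ring.
    rewrite Z.pow_succ_r by lia.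
    assert (0 < 2 ^ k) by (apply Z.pow_pos_nonneg; lia).
    assert (2 ^ (k + 1) = 2 * 2 ^ k) by (rewrite Z.pow_add_r, Z.pow_1_r by lia; ring).
    destruct (Z.Even_or_Odd a) as [[a' ->]|[a' ->]].
    + replace (2 * 2 ^ (k + 1) * b - 2 * a') with (2 * (2 ^ (k + 1) * b - a')) by ring.
      rewrite !runs_odd_double, low_run_single_double by nia. apply IH; lia.
    + replace (2 * 2 ^ (k + 1) * b - (2 * a' + 1))
        with (2 * (2 ^ (k + 1) * b - (a' + 1)) + 1) by ring.
      rewrite runs_odd_double_succ, IH by nia.
      rewrite runs_odd_double_succ, low_run_single_double_succ by lia.
      assert (Hpred := runs_odd_pred (a' + 1) ltac:(lia)).
      replace (a' + 1 - 1) with a' in Hpred by ring.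
      rewrite Z.even_sub, Z.even_mul, Z.even_pow by lia.
      rewrite Z.even_add in *; simpl (Z.even 2); simpl (Z.even 1) in *.
      destruct (runs_odd (a' + 1)), (runs_odd a'), (Z.even a'), (low_run_single (a' + 1)),
        (runs_odd b), (low_run_single b); simpl in *; congruence.
Qed.

Lemma runs_odd_sub_sparse a b : 1 <= a -> 0 < b -> (2 ^ (a + 1) | b) ->
  runs_odd (b - a) =
  negb (xorb (xorb (runs_odd a) (runs_odd b))
             (xorb (low_run_single a) (low_run_single b))).
Proof.
  intros Ha Hb [c ->].
  assert (0 < 2 ^ (a + 1)) by (apply Z.pow_pos_nonneg; lia).
  assert (a < 2 ^ a) by (apply Z.pow_gt_lin_r; lia).
  rewrite Z.mul_comm, runs_odd_sub, runs_odd_shift, low_run_single_shift by nia.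
  reflexivity.
Qed.

Definition pairwise_diffs (x y z : Z) : list Z := [x; y; z; y - x; z - x; z - y].

Definition sparse_triple (x y z : Z) : Prop :=
  0 < x < y /\ y < z /\ (2 ^ (x + 1) | y) /\ (2 ^ (y + 1) | z).

Lemma sparse_triple_runs_odd x y z :
  sparse_triple x y z -> existsb runs_odd (pairwise_diffs x y z) = true.
Proof.
  intros (Hxy & Hyz & Hx & Hy).
  assert (Hxz : (2 ^ (x + 1) | z)).
  { apply (Z.divide_trans _ (2 ^ (y + 1))); [|exact Hy].
    exists (2 ^ (y - x)). rewrite <- Z.pow_add_r by lia. f_equal; ring. }
  simpl; rewrite !runs_odd_sub_sparse by first [assumption | lia].
  destruct (runs_odd x), (runs_odd y), (runs_odd z),
    (low_run_single x), (low_run_single y), (low_run_single z); reflexivity.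
Qed.

Lemma infinite_avoid L : subN L -> infinite_set L ->
  forall B l, exists x, L x /\ B < x /\ ~ In x l.
Proof.
  intros HL Hinf B l. apply NNPP; intro Hnone. apply Hinf.
  exists (l ++ map Z.of_nat (seq 0 (S (Z.to_nat B)))).
  intros y Hy. apply in_or_app.
  destruct (classic (In y l)) as [Hin|Hin]; [left; exact Hin|right].
  assert (y <= B) by (apply Z.nlt_ge; intro; apply Hnone; exists y; auto).
  specialize (HL y Hy).
  apply in_map_iff. exists (Z.to_nat y). split; [lia|]. apply in_seq. lia.
Qed.

Lemma infinite_distinct_above L : subN L -> infinite_set L ->
  forall B n, exists l, length l = n /\ NoDup l /\ forall x, In x l -> L x /\ B < x.
Proof.
  intros HL Hinf B n. induction n as [|n (l & Hlen & Hnd & Hl)].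
  - exists []. split; [reflexivity|split; [constructor|intros x []]].
  - destruct (infinite_avoid L HL Hinf B l) as (x & Lx & Bx & Hx).
    exists (x :: l). split; [simpl; lia|]. split; [constructor; assumption|].
    intros y [<-|Hy]; auto.
Qed.

Lemma residue_collision M l : 0 < M -> NoDup l -> (Z.to_nat M < length l)%nat ->
  exists x y, In x l /\ In y l /\ x < y /\ (M | y - x).
Proof.
  intros HM Hnd Hlen. apply NNPP; intro Hnone.
  assert (Hinj : NoDup (map (fun x => x mod M) l)).
  { apply NoDup_map_NoDup_ForallPairs; [|exact Hnd].
    intros x y Hx Hy Hxy.
    assert (Hdiv : forall a b, a mod M = b mod M -> (M | b - a)).
    { intros a b Hab. exists (b / M - a / M).
      rewrite (Z_div_mod_eq_full a M), (Z_div_mod_eq_full b M) at 1. nia. }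
    destruct (Z.lt_trichotomy x y) as [Hlt|[Heq|Hlt]]; [| exact Heq |];
      exfalso; apply Hnone; eauto 7. }
  assert (Hincl : incl (map (fun x => x mod M) l) (map Z.of_nat (seq 0 (Z.to_nat M)))).
  { intros r Hr. apply in_map_iff in Hr as (x & <- & _).
    assert (Hb := Z.mod_pos_bound x M HM).
    apply in_map_iff. exists (Z.to_nat (x mod M)). split; [lia|]. apply in_seq. lia. }
  assert (Hle := NoDup_incl_length Hinj Hincl).
  rewrite !length_map, length_seq in Hle. lia.
Qed.

Lemma infinite_gap_multiple L : subN L -> infinite_set L ->
  forall B M, 0 < M -> exists a b, L a /\ L b /\ B < a < b /\ (M | b - a).
Proof.
  intros HL Hinf B M HM.
  destruct (infinite_distinct_above L HL Hinf B (S (Z.to_nat M))) as (l & Hlen & Hnd & Hl).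
  destruct (residue_collision M l HM Hnd ltac:(lia)) as (a & b & Ha & Hb & Hab & Hdiv).
  apply Hl in Ha as [La Ba]. apply Hl in Hb as [Lb _].
  exists a, b. repeat split; assumption.
Qed.

Lemma SIP_sigma_sub L pos neg : NoDup pos -> NoDup neg ->
  (forall y, In y pos -> L y) -> (forall y, In y neg -> L y) ->
  SIP L (sigma pos - sigma neg).
Proof.
  intros. exists (sigma pos), (sigma neg).
  split; [exists pos; auto | split; [exists neg; auto | reflexivity]].
Qed.

Lemma SIP_gap L l a b : L l -> L a -> L b -> l < a < b -> SIP L (l + (b - a)).
Proof.
  intros Ll La Lb Hlab.
  replace (l + (b - a)) with (sigma [l; b] - sigma [a]) by (simpl; ring).
  apply SIP_sigma_sub.
  - repeat constructor; simpl; lia.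
  - repeat constructor; simpl; lia.
  - intros y Hy; repeat destruct Hy as [<-|Hy]; easy.
  - intros y Hy; repeat destruct Hy as [<-|Hy]; easy.
Qed.

Lemma SIP_gap_sub L l a b a' b' : L l -> L a -> L b -> L a' -> L b' ->
  l < a < b -> b < a' < b' -> SIP L (l + (b' - a') - (b - a)).
Proof.
  intros Ll La Lb La' Lb' Hlab Hba'.
  replace (l + (b' - a') - (b - a)) with (sigma [l; b'; a] - sigma [a'; b])
    by (simpl; ring).
  apply SIP_sigma_sub.
  - repeat constructor; simpl; lia.
  - repeat constructor; simpl; lia.
  - intros y Hy; repeat destruct Hy as [<-|Hy]; easy.
  - intros y Hy; repeat destruct Hy as [<-|Hy]; easy.
Qed.

Lemma lt_pow2_succ x : 0 <= x -> x < 2 ^ (x + 1).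
Proof.
  intro Hx. rewrite Z.pow_add_r, Z.pow_1_r by lia.
  pose proof (Z.pow_gt_lin_r 2 x ltac:(lia) Hx). lia.
Qed.

Lemma SIP_sparse_translates L l0 M : subN L -> infinite_set L -> L l0 -> 0 < M ->
  exists x y z, sparse_triple x y z /\
    forall m, In m (pairwise_diffs x y z) -> SIP L (l0 + M * m).
Proof.
  intros HL Hinf L0 HM.
  destruct (infinite_gap_multiple L HL Hinf l0 M HM)
    as (a1 & b1 & La1 & Lb1 & H1 & [x Hx]).
  assert (HX : 0 < 2 ^ (x + 1)) by (apply Z.pow_pos_nonneg; nia).
  destruct (infinite_gap_multiple L HL Hinf b1 (M * 2 ^ (x + 1)) ltac:(nia))
    as (a2 & b2 & La2 & Lb2 & H2 & [y' Hy']).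
  set (y := y' * 2 ^ (x + 1)).
  assert (HY : 0 < 2 ^ (y + 1)) by (apply Z.pow_pos_nonneg; nia).
  destruct (infinite_gap_multiple L HL Hinf b2 (M * 2 ^ (y + 1)) ltac:(nia))
    as (a3 & b3 & La3 & Lb3 & H3 & [z' Hz']).
  set (z := z' * 2 ^ (y + 1)).
  assert (Hx1 := lt_pow2_succ x ltac:(nia)).
  assert (Hy1 := lt_pow2_succ y ltac:(nia)).
  exists x, y, z. split.
  - assert (0 < y') by nia. assert (0 < z') by nia.
    repeat split; [nia | subst y; nia | subst z; nia
                  | apply Z.divide_factor_r | apply Z.divide_factor_r].
  - intros m Hm; repeat destruct Hm as [<-|Hm]; try contradiction.
    + replace (l0 + M * x) with (l0 + (b1 - a1)) by lia. apply SIP_gap; auto; lia.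
    + replace (l0 + M * y) with (l0 + (b2 - a2)) by (subst y; lia).
      apply SIP_gap; auto; lia.
    + replace (l0 + M * z) with (l0 + (b3 - a3)) by (subst z; lia).
      apply SIP_gap; auto; lia.
    + replace (l0 + M * (y - x)) with (l0 + (b2 - a2) - (b1 - a1)) by (subst y; lia).
      apply SIP_gap_sub; auto; lia.
    + replace (l0 + M * (z - x)) with (l0 + (b3 - a3) - (b1 - a1)) by (subst z; lia).
      apply SIP_gap_sub; auto; lia.
    + replace (l0 + M * (z - y)) with (l0 + (b3 - a3) - (b2 - a2)) by (subst y z; lia).
      apply SIP_gap_sub; auto; lia.
Qed.

Lemma SIP_member L l : L l -> SIP L l.
Proof.
  intro Ll. replace l with (sigma [l] - sigma []) by (simpl; ring).
  apply SIP_sigma_sub.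
  - repeat constructor. intros [].
  - constructor.
  - intros y [<-|[]]; exact Ll.
  - intros y [].
Qed.

Lemma translate_SIP_not_runs_monochromatic L u c : subN L -> infinite_set L ->
  ~ (forall x, SIP L x -> 0 < x + u -> runs_odd (x + u) = c).
Proof.
  intros HL Hinf Hmono.
  destruct (infinite_avoid L HL Hinf (- u) []) as (l0 & L0 & Hl0 & _).
  set (y0 := l0 + u).
  assert (Hy0 : y0 < 2 ^ y0) by (apply Z.pow_gt_lin_r; lia).
  assert (HM : 0 < 2 ^ (y0 + 1)) by (apply Z.pow_pos_nonneg; lia).
  destruct (SIP_sparse_translates L l0 (2 ^ (y0 + 1)) HL Hinf L0 HM)
    as (x & y & z & Hxyz & Htrans).
  destruct (proj1 (existsb_exists _ _) (sparse_triple_runs_odd x y z Hxyz))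
    as (m & Hm & Hodd).
  assert (Hm_pos : 0 < m).
  { destruct Hxyz as (? & ? & _).
    repeat destruct Hm as [<-|Hm]; try contradiction; lia. }
  assert (Hc0 := Hmono l0 (SIP_member L l0 L0) ltac:(lia)).
  assert (Hcm := Hmono _ (Htrans m Hm) ltac:(nia)).
  replace (l0 + 2 ^ (y0 + 1) * m + u) with (y0 + 2 ^ (y0 + 1) * m) in Hcm
    by (subst y0; ring).
  rewrite runs_odd_concat in Hcm by lia.
  fold y0 in Hc0. rewrite Hc0, Hodd in Hcm. destruct c; discriminate.
Qed.

Lemma In_le_fold_max l x : In x l -> x <= fold_right Z.max 0 l.
Proof.
  induction l as [|y l IH]; simpl; [tauto|].
  intros [<-|Hx]; [|specialize (IH Hx)]; lia.
Qed.

Lemma positives_infinite : infinite_set (fun x => 0 < x).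
Proof.
  intros [l Hl].
  assert (Hmax := In_le_fold_max l _ (Hl (1 + Z.abs (fold_right Z.max 0 l)) ltac:(lia))).
  lia.
Qed.

Lemma SIP_set_split_by_runs A :
  exists A1 A2 : Z -> Prop,
    (forall x, A x <-> (A1 x \/ A2 x)) /\
    (forall x, ~ (A1 x /\ A2 x)) /\
    ~ contains_translate_SIP A1 /\ ~ contains_translate_SIP A2.
Proof.
  exists (fun x => A x /\ runs_odd x = true), (fun x => A x /\ runs_odd x = false).
  split; [|split; [|split]].
  - intro x; destruct (runs_odd x); tauto.
  - intros x [[_ E1] [_ E2]]; congruence.
  - intros (L & u & HL & Hinf & Hsub).
    apply (translate_SIP_not_runs_monochromatic L u true HL Hinf).
    intros x Hx Hpos; exact (proj2 (Hsub x Hx Hpos)).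
  - intros (L & u & HL & Hinf & Hsub).
    apply (translate_SIP_not_runs_monochromatic L u false HL Hinf).
    intros x Hx Hpos; exact (proj2 (Hsub x Hx Hpos)).
Qed.

Theorem theorem4p7 :
  (forall A : Z -> Prop, subN A -> is_SIP_set A ->
     exists A1 A2 : Z -> Prop,
       (forall x, A x <-> (A1 x \/ A2 x)) /\
       (forall x, ~ (A1 x /\ A2 x)) /\
       ~ contains_translate_SIP A1 /\ ~ contains_translate_SIP A2)
  /\ ~ filterdual contains_translate_SIP.
Proof.
  split; [intros A _ _; apply SIP_set_split_by_runs|].
  intro Hdual.
  destruct (SIP_set_split_by_runs (fun x => 0 < x)) as (A1 & A2 & Hsplit & _ & N1 & N2).
  assert (Hall : contains_translate_SIP (fun x => A1 x \/ A2 x)).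
  { exists (fun x => 0 < x), 0.
    split; [intros x Hx; exact Hx | split; [exact positives_infinite|]].
    intros x _ Hx. apply Hsplit. exact Hx. }
  destruct (Hdual A1 A2) as [H1|H2].
  - intros x Hx; apply Hsplit; left; exact Hx.
  - intros x Hx; apply Hsplit; right; exact Hx.
  - exact Hall.
  - exact (N1 H1).
  - exact (N2 H2).
Qed.
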